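(* Let $k$ be a field of characteristic $p>2$ ($p$ prime). For any $u,v,w\in k_0\langle X\rangle$, $\kappa(u,vw)\equiv 0\pmod{T(G_0)}$.
   Context: $X=\{x_i\mid i\ge0\}$ is countably infinite; $k_0\langle X\rangle$ is the free nonunitary associative $k$-algebra on $X$. $[a,b]=ab-ba$ and $\kappa(u,v)=[u,v]u^{p-1}v^{p-1}$. $G_0$ is the infinite-dimensional nonunitary Grassmann algebra over $k$ (linear basis the products $e_{i_1}\cdots e_{i_n}$, $n\ge1$, $i_1<\dots<i_n$, with $e_ie_j=-e_je_i$, $e_i^2=0$), and $T(G_0)$ is the set of $f\in k_0\langle X\rangle$ lying in the kernel of every algebra homomorphism $k_0\langle X\rangle\to G_0$. *)

From mathcomp Require Import all_boot all_order all_algebra.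
From mathcomp Require Import finmap.
Set Implicit Arguments. Unset Strict Implicit. Unset Printing Implicit Defensive.
Import Order.TTheory GRing.Theory.
Local Open Scope ring_scope.


Section Defs.
Variable k : fieldType.

(* The free nonunitary associative algebra k_0<X>, X = {x_i | i >= 0}.      *)
(* An element is represented by its coefficient function on words           *)
(* (w : seq nat, the word x_{w_0} x_{w_1} ... ); elements are exactly the   *)
(* finitely supported coefficient functions vanishing on the empty word.    *)
Definition FA := seq nat -> k.

Definition isFA (f : FA) : Prop :=
  f [::] = 0 /\ exists s : seq (seq nat), forall w, f w != 0 -> w \in s.

Definition fa_add (f g : FA) : FA := fun w => f w + g w.
Definition fa_opp (f : FA) : FA := fun w => - f w.
Definition fa_sub (f g : FA) : FA := fa_add f (fa_opp g).
Definition fa_scale (c : k) (f : FA) : FA := fun w => c * f w.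
(* concatenation product: coefficient of w is sum over splittings w = a b,
   a, b nonempty *)
Definition fa_mul (f g : FA) : FA :=
  fun w => \sum_(1 <= i < size w) f (take i w) * g (drop i w).
(* fa_pow f n = f^n for n >= 1 (f * f * ... * f, n factors) *)
Definition fa_pow (f : FA) (n : nat) : FA := iter n.-1 (fa_mul f) f.

Definition fa_comm (f g : FA) : FA := fa_sub (fa_mul f g) (fa_mul g f).

Definition kappa (p : nat) (u v : FA) : FA :=
  fa_mul (fa_mul (fa_comm u v) (fa_pow u p.-1)) (fa_pow v p.-1).

(* The infinite-dimensional nonunitary Grassmann algebra G_0 over k.       *)
(* Basis: e_S = e_{i_1} ... e_{i_n} for nonempty finite S = {i_1<...<i_n}. *)
(* An element is its coefficient function on finite sets of indices;       *)
(* elements are the finitely supported functions vanishing on the empty set.*)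
Definition G0 := {fset nat} -> k.

Definition isG0 (g : G0) : Prop :=
  g fset0 = 0 /\ exists s : seq {fset nat}, forall S, g S != 0 -> S \in s.

Definition g0_zero : G0 := fun _ => 0.
Definition g0_add (f g : G0) : G0 := fun S => f S + g S.
Definition g0_scale (c : k) (f : G0) : G0 := fun S => c * f S.

Definition ninv (A B : {fset nat}) : nat :=
  \sum_(a <- A) \sum_(b <- B) (b < a)%N.

(* e_A e_B = (-1)^(ninv A B) e_(A :|: B) if A, B disjoint, 0 otherwise. *)
Definition g0_mul (f g : G0) : G0 :=
  fun S => \sum_(A <- fpowerset S)
             (-1) ^+ ninv A (S `\` A)%fset * f A * g (S `\` A)%fset.

Definition alg_hom (phi : FA -> G0) : Prop :=
  [/\ forall f, isFA f -> isG0 (phi f),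
      forall f g, isFA f -> isFA g -> phi (fa_add f g) = g0_add (phi f) (phi g),
      forall c f, isFA f -> phi (fa_scale c f) = g0_scale c (phi f) &
      forall f g, isFA f -> isFA g -> phi (fa_mul f g) = g0_mul (phi f) (phi g)].

Definition T_G0 (f : FA) : Prop :=
  isFA f /\ forall phi, alg_hom phi -> phi f = g0_zero.

End Defs.

(* In the Grassmann algebra every element splits as a = a0 + a1 with a0 even,
   hence central, and a1 odd; odd elements anticommute and square to zero, and
   in characteristic p the even part of an element without constant term
   satisfies a0^p = 0 (Frobenius is additive on commuting elements and every
   even basis monomial squares to zero).  Writing b = vw = b0 + b1 with
   b0 = v0 w0 + v1 w1 and b1 = v0 w1 + v1 w0, these rules give
   kappa(a, b) = 2 a0^(p-1) a1 b1 b0^(p-1), and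
   b1 b0^(p-1) = (v0 w0)^(p-1) b1 = v0^p w0^(p-1) w1 + v1 v0^(p-1) w0^p = 0. *)

From mathcomp Require Import all_boot all_order all_algebra.
From mathcomp Require Import finmap.
From mathcomp Require Import boolp.
From mathcomp Require Import ring zify.
From HB Require Import structures.
Set Implicit Arguments. Unset Strict Implicit. Unset Printing Implicit Defensive.
Import Order.TTheory GRing.Theory.
Local Open Scope ring_scope.

Section FsetSums.
Local Open Scope fset_scope.
Implicit Types A B C D S X : {fset nat}.

Lemma big_fsetU_disjoint (R : Type) (idx : R) (op : Monoid.com_law idx)
    B C (F : nat -> R) : [disjoint B & C] ->
  \big[op/idx]_(i <- B `|` C) F i =
  op (\big[op/idx]_(i <- B) F i) (\big[op/idx]_(i <- C) F i).
Proof.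
move=> /fdisjointP dBC; rewrite (big_fsetID _ (mem B)); congr (op _ _).
  by apply: eq_fbigl => i; rewrite !inE /=; case: (i \in B); rewrite ?andbF.
apply: eq_fbigl => i; rewrite !inE /=.
by case iB: (i \in B) => /=; [have := dBC _ iB; case: (i \in C)|rewrite andbT].
Qed.

Lemma ninvUl B C D : [disjoint B & C] -> ninv (B `|` C) D = (ninv B D + ninv C D)%N.
Proof. by move=> dBC; rewrite /ninv big_fsetU_disjoint. Qed.

Lemma ninvUr B C D : [disjoint C & D] -> ninv B (C `|` D) = (ninv B C + ninv B D)%N.
Proof.
by move=> dCD; rewrite /ninv -big_split; apply: eq_bigr => a _; rewrite big_fsetU_disjoint.
Qed.

Lemma ninv0l B : ninv fset0 B = 0%N.
Proof. by rewrite /ninv big_seq_fset0. Qed.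

Lemma ninv0r B : ninv B fset0 = 0%N.
Proof. by rewrite /ninv big1 // => a _; rewrite big_seq_fset0. Qed.

Lemma ninvC A B : [disjoint A & B] -> (ninv A B + ninv B A)%N = (#|` A| * #|` B|)%N.
Proof.
move=> /fdisjointP dAB; rewrite /ninv [X in (_ + X)%N]exchange_big -big_split /=.
rewrite card_fset_sum1 big_distrl /= big_seq [RHS]big_seq; apply: eq_bigr => a aA.
rewrite mul1n card_fset_sum1 -big_split big_seq [RHS]big_seq /=.
apply: eq_bigr => b bB; have: a != b by apply: contraNneq (dAB _ aA) => ->.
by rewrite neq_ltn; case: ltngtP.
Qed.

Lemma fdisjointDr A S : [disjoint A & S `\` A].
Proof. by apply/fdisjointP => x xA; rewrite inE xA. Qed.

Lemma fsetUDK B C : [disjoint B & C] -> (B `|` C) `\` B = C.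
Proof.
by rewrite fdisjoint_sym => /fsetDidPl dCB; rewrite fsetDUl fsetDv fset0U dCB.
Qed.

Lemma fsetUDS C X : C `<=` X -> C `|` (X `\` C) = X.
Proof. by move=> /fsetUidPr CX; rewrite fsetUDl fsetDv fsetD0 CX. Qed.

Lemma sum_fpowerset_nested (V : nmodType) (F : {fset nat} -> {fset nat} -> V) S :
  \sum_(A <- fpowerset S) \sum_(B <- fpowerset A) F B A =
  \sum_(B <- fpowerset S) \sum_(C <- fpowerset (S `\` B)) F B (B `|` C).
Proof.
transitivity (\sum_(A <- fpowerset S) \sum_(B <- fpowerset S)
   (if B `<=` A then F B A else 0)).
  rewrite big_seq [RHS]big_seq; apply: eq_bigr => A; rewrite fpowersetE => AS.
  rewrite -big_mkcond /=; apply: eq_fbigl_cond => B.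
  rewrite !inE !fpowersetE andbT.
  by case BA: (B `<=` A); rewrite ?andbF ?(fsubset_trans BA AS).
rewrite exchange_big /= big_seq [RHS]big_seq; apply: eq_bigr => B.
rewrite fpowersetE => BS; rewrite -big_mkcond /=.
transitivity (\sum_(A <- [fset B `|` C | C in fpowerset (S `\` B)]) F B A).
  apply: eq_fbigl_cond => A.
  rewrite !inE /= andbT fpowersetE; apply/andP/imfsetP => /=.
    case=> AS BA; exists (A `\` B); first by rewrite fpowersetE fsetSD.
    by rewrite fsetUDS.
  case=> C; rewrite fpowersetE => CSB ->; split; last exact: fsubsetUl.
  by rewrite fsubUset BS (fsubset_trans CSB) ?fsubsetDl.
rewrite big_imfset //= => C1 C2; rewrite !fpowersetCE => /andP[_ dC1] /andP[_ dC2] e.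
rewrite fdisjoint_sym in dC1; rewrite fdisjoint_sym in dC2.
by move: (congr1 (fsetD^~ B) e); rewrite /= !fsetUDK.
Qed.

End FsetSums.

Section SuperCommutation.
Variable R : nzRingType.

Definition central (x : R) := forall y, x * y = y * x.

Lemma centralX (x : R) n : central x -> central (x ^+ n).
Proof. by move=> cx y; apply/esym/commrX/esym/cx. Qed.

Lemma centralM (x y : R) : central x -> central y -> central (x * y).
Proof. by move=> cx cy z; rewrite -mulrA cy mulrA cx mulrA. Qed.

Lemma conj_exprX (c y z : R) n : c * y = z * c -> c * y ^+ n = z ^+ n * c.
Proof.
move=> h; elim: n => [|n IHn]; first by rewrite !expr0 mulr1 mul1r.
by rewrite exprSr mulrA IHn -mulrA h mulrA -exprSr.
Qed.

Lemma commutatorDl (x y b : R) :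
  (x + y) * b - b * (x + y) = (x * b - b * x) + (y * b - b * y).
Proof. by rewrite mulrDl mulrDr opprD addrACA. Qed.

Lemma commutatorDr (a x y : R) :
  a * (x + y) - (x + y) * a = (a * x - x * a) + (a * y - y * a).
Proof. by rewrite mulrDl mulrDr opprD addrACA. Qed.

Lemma super_kappa (a0 a1 b0 b1 : R) n :
  central a0 -> central b0 -> a1 * a1 = 0 -> b1 * b1 = 0 -> b1 * a1 = - (a1 * b1) ->
  ((a0 + a1) * (b0 + b1) - (b0 + b1) * (a0 + a1)) * (a0 + a1) ^+ n * (b0 + b1) ^+ n
  = (a0 ^+ n * a1 * (b1 * b0 ^+ n)) *+ 2.
Proof.
move=> ca0 cb0 a1a1 b1b1 b1a1.
have -> : (a0 + a1) * (b0 + b1) - (b0 + b1) * (a0 + a1) = a1 * b1 *+ 2.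
  by rewrite commutatorDl ca0 subrr add0r commutatorDr cb0 subrr add0r b1a1 opprK.
have c_a : a1 * b1 * (a0 + a1) = a0 * (a1 * b1).
  rewrite mulrDr -ca0 -[a1 * b1 * a1]mulrA b1a1 mulrN [a1 * (a1 * b1)]mulrA.
  by rewrite a1a1 mul0r oppr0 addr0.
have b1_b : b1 * (b0 + b1) = b0 * b1 by rewrite mulrDr b1b1 addr0 cb0.
rewrite !mulrnAl (conj_exprX _ c_a) -!mulrA (conj_exprX _ b1_b).
by rewrite (centralX _ cb0) !mulrA.
Qed.

Lemma super_prod_odd_even (v0 v1 w0 w1 : R) n :
  central v0 -> central w0 -> v1 * v1 = 0 -> w1 * w1 = 0 -> w1 * v1 = - (v1 * w1) ->
  v0 ^+ n.+1 = 0 -> w0 ^+ n.+1 = 0 ->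
  (v0 * w1 + v1 * w0) * (v0 * w0 + v1 * w1) ^+ n = 0.
Proof.
move=> cv0 cw0 v1v1 w1w1 w1v1 v0n w0n.
set b1 := v0 * w1 + v1 * w0.
have b1_F : b1 * (v1 * w1) = 0.
  rewrite mulrDl -!mulrA (mulrA w1) w1v1 mulNr -mulrA w1w1 mulr0 oppr0 mulr0.
  by rewrite add0r (mulrA w0) cw0 !mulrA v1v1 !mul0r.
have b1_b0 : b1 * (v0 * w0 + v1 * w1) = (v0 * w0) * b1.
  by rewrite mulrDr b1_F addr0 (centralM cv0 cw0).
rewrite (conj_exprX _ b1_b0) exprMn_comm; last exact: cv0.
have v0_term : v0 ^+ n * w0 ^+ n * (v0 * w1) = 0.
  rewrite -mulrA (mulrA (w0 ^+ n)) (centralX _ cw0 v0) -mulrA mulrA.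
  by rewrite -exprSr v0n mul0r.
have w0_term : v0 ^+ n * w0 ^+ n * (v1 * w0) = 0.
  rewrite -mulrA (mulrA (w0 ^+ n)) (centralX _ cw0 v1) -mulrA.
  by rewrite -exprSr w0n !mulr0.
by rewrite /b1 mulrDr v0_term w0_term addr0.
Qed.

End SuperCommutation.

(* [G0 k] is a bare function type; its copy [grass k] carries the ring
   structure, with [g0_add] and [g0_mul] as operations. *)
Definition grass (k : fieldType) := G0 k.
HB.instance Definition _ (k : fieldType) := gen_eqMixin (grass k).
HB.instance Definition _ (k : fieldType) := gen_choiceMixin (grass k).

Section GrassZmodule.
Variable k : fieldType.
Implicit Types f g h : grass k.

Definition grass_opp f : grass k := fun S => - f S.

Lemma grass_addA : associative (@g0_add k).
Proof. by move=> f g h; apply/funext => S; rewrite /g0_add addrA. Qed.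

Lemma grass_addC : commutative (@g0_add k).
Proof. by move=> f g; apply/funext => S; rewrite /g0_add addrC. Qed.

Lemma grass_add0 : left_id (@g0_zero k) (@g0_add k).
Proof. by move=> f; apply/funext => S; rewrite /g0_add /g0_zero add0r. Qed.

Lemma grass_addN : left_inverse (@g0_zero k) grass_opp (@g0_add k).
Proof. by move=> f; apply/funext => S; rewrite /g0_add /g0_zero /grass_opp addNr. Qed.

End GrassZmodule.

HB.instance Definition _ (k : fieldType) := GRing.isZmodule.Build (grass k)
  (@grass_addA k) (@grass_addC k) (@grass_add0 k) (@grass_addN k).

Section GrassRing.
Variable k : fieldType.
Implicit Types f g h : grass k.
Local Open Scope fset_scope.
Local Notation sgn A B := ((-1 : k) ^+ ninv A B).

Lemma sgn_ninvA (B C D : {fset nat}) :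
  [disjoint B & C] -> [disjoint C & D] -> [disjoint B & D] ->
  sgn (B `|` C) D * sgn B C = sgn B (C `|` D) * sgn C D.
Proof.
by move=> dBC dCD dBD; rewrite -!exprD ninvUl // ninvUr //; congr (_ ^+ _); lia.
Qed.

Definition grass_mul f g : grass k := g0_mul f g.

Lemma grass_mulA : associative grass_mul.
Proof.
move=> f g h; apply/funext => S; rewrite /grass_mul /g0_mul; symmetry.
under [RHS]eq_bigr do rewrite mulr_sumr.
under [LHS]eq_bigr do rewrite mulr_sumr mulr_suml.
rewrite sum_fpowerset_nested big_seq [RHS]big_seq; apply: eq_bigr => B.
rewrite fpowersetE => BS; rewrite big_seq [RHS]big_seq; apply: eq_bigr => C.
rewrite fpowersetE => CSB; have dBC := fdisjointWr CSB (fdisjointDr B S).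
rewrite fsetUDK // fsetDDl; set D := S `\` (B `|` C).
have -> : S `\` B = C `|` D by rewrite /D -fsetDDl fsetUDS.
have dCD : [disjoint C & D] by rewrite /D -fsetDDl fdisjointDr.
have dBD : [disjoint B & D] by apply/fdisjointP => x xB; rewrite /D !inE xB.
transitivity ((sgn (B `|` C) D * sgn B C) * (f B * g C * h D)); first by ring.
by rewrite sgn_ninvA //; ring.
Qed.

Definition grass_one : grass k := fun S => if S == fset0 then 1 else 0.

Lemma grass_mul1 : left_id grass_one grass_mul.
Proof.
move=> f; apply/funext => S; rewrite /grass_mul /g0_mul.
rewrite (big_fsetD1 fset0) ?fpowersetE ?fsub0set //= /grass_one eqxx ninv0l.
rewrite fsetD0 expr0 !mul1r big1_fset ?addr0 // => A; rewrite !inE => /andP[nA _] _.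
by rewrite (negbTE nA) mulr0 mul0r.
Qed.

Lemma grass_mulr1 : right_id grass_one grass_mul.
Proof.
move=> f; apply/funext => S; rewrite /grass_mul /g0_mul.
rewrite (big_fsetD1 S) ?fpowersetE ?fsubset_refl //= /grass_one fsetDv eqxx ninv0r.
rewrite expr0 !mul1r mulr1 big1_fset ?addr0 // => A.
rewrite !inE fpowersetE => /andP[nA AS] _.
have -> : (S `\` A == fset0) = false.
  by rewrite fsetD_eq0; apply: contraNF nA => SA; rewrite eqEfsubset AS SA.
by rewrite mulr0.
Qed.

Lemma grass_mulDl : left_distributive grass_mul (@g0_add k).
Proof.
move=> f g h; apply/funext => S; rewrite /grass_mul /g0_mul /g0_add -big_split /=.
by apply: eq_bigr => A _; rewrite mulrDr mulrDl.
Qed.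

Lemma grass_mulDr : right_distributive grass_mul (@g0_add k).
Proof.
move=> f g h; apply/funext => S; rewrite /grass_mul /g0_mul /g0_add -big_split /=.
by apply: eq_bigr => A _; rewrite mulrDr.
Qed.

Lemma grass_one_neq0 : grass_one != g0_zero k.
Proof.
apply/negP => /eqP /(congr1 (fun f => f fset0)); rewrite /grass_one /g0_zero eqxx.
by move/eqP; rewrite oner_eq0.
Qed.

End GrassRing.

HB.instance Definition _ (k : fieldType) :=
  GRing.Zmodule_isNzRing.Build (grass k) (@grass_mulA k) (@grass_mul1 k)
    (@grass_mulr1 k) (@grass_mulDl k) (@grass_mulDr k) (@grass_one_neq0 k).

Section GrassParity.
Variable k : fieldType.
Implicit Types (x y : grass k) (A B S : {fset nat}).
Local Open Scope fset_scope.
Local Open Scope ring_scope.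
Local Notation sgn A B := ((-1 : k) ^+ ninv A B).

Lemma grass_addE x y S : (x + y) S = x S + y S. Proof. by []. Qed.
Lemma grass_oppE x S : (- x) S = - x S. Proof. by []. Qed.
Lemma grass0E S : (0 : grass k) S = 0. Proof. by []. Qed.
Lemma grass1E S : (1 : grass k) S = if S == fset0 then 1 else 0. Proof. by []. Qed.
Lemma grass_mulE x y S :
  (x * y) S = \sum_(A <- fpowerset S) sgn A (S `\` A) * x A * y (S `\` A).
Proof. by []. Qed.

Lemma grass_mulE_rev x y S :
  (y * x) S = \sum_(A <- fpowerset S) sgn (S `\` A) A * y (S `\` A) * x A.
Proof.
rewrite grass_mulE.
transitivity (\sum_(A <- [fset S `\` B | B in fpowerset S])
                sgn A (S `\` A) * y A * x (S `\` A)).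
  apply: eq_fbigl => A; rewrite fpowersetE; apply/idP/imfsetP => /=.
    by move=> AS; exists (S `\` A); rewrite ?fpowersetE ?fsubsetDl // fsetDK.
  by case=> B _ ->; rewrite fsubsetDl.
rewrite big_imfset /=; last first.
  by move=> B1 B2; rewrite !fpowersetE => SB1 SB2 e; rewrite -(fsetDK SB1) e fsetDK.
rewrite big_seq [RHS]big_seq; apply: eq_bigr => A; rewrite fpowersetE => AS.
by rewrite fsetDK.
Qed.

Lemma sgnC A B : [disjoint A & B] ->
  sgn B A = (-1) ^+ (odd #|` A| && odd #|` B|) * sgn A B.
Proof.
move=> dAB; rewrite -oddM signr_odd -(ninvC dAB) exprD mulrAC -exprD addnn -mul2n.
by rewrite mulnC exprM sqrr_sign mul1r.
Qed.

Definition homog (b : bool) x := forall S, odd #|` S| != b -> x S = 0.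

Lemma odd_card_fsetD A S : A `<=` S -> odd #|` S| = odd #|` A| (+) odd #|` S `\` A|.
Proof. by move=> AS; rewrite cardfsDS // -oddD subnKC // fsubset_leq_card. Qed.

Lemma homogD b x y : homog b x -> homog b y -> homog b (x + y).
Proof. by move=> hx hy S hS; rewrite grass_addE hx // hy // addr0. Qed.

Lemma homogM a b x y : homog a x -> homog b y -> homog (a (+) b) (x * y).
Proof.
move=> hx hy S hS; rewrite grass_mulE big1_fset // => A; rewrite fpowersetE => AS _.
case ea: (odd #|` A| == a); last by rewrite hx ?ea // mulr0 mul0r.
case eb: (odd #|` S `\` A| == b); last by rewrite (hy (S `\` A)) ?eb // mulr0.
by move: hS; rewrite (odd_card_fsetD AS) (eqP ea) (eqP eb) eqxx.
Qed.

Lemma even_central x : homog false x -> central x.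
Proof.
move=> hx y; apply/funext => S; rewrite grass_mulE grass_mulE_rev.
rewrite big_seq [RHS]big_seq; apply: eq_bigr => A; rewrite fpowersetE => AS.
rewrite (sgnC (fdisjointDr A S)).
case oA: (odd #|` A|); last by rewrite /= expr0 mul1r; ring.
by rewrite hx ?oA // !mulr0 mul0r.
Qed.

Lemma odd_anticomm x y : homog true x -> homog true y -> x * y = - (y * x).
Proof.
move=> hx hy; apply/funext => S; rewrite grass_mulE grass_oppE grass_mulE_rev -sumrN.
rewrite big_seq [RHS]big_seq; apply: eq_bigr => A; rewrite fpowersetE => AS.
rewrite (sgnC (fdisjointDr A S)).
case oA: (odd #|` A|); last by rewrite hx ?oA // ?mulr0 ?mul0r ?oppr0.
case oB: (odd #|` S `\` A|); last by rewrite (hy (S `\` A)) ?oB // ?mulr0 ?mul0r ?oppr0.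
by rewrite /= expr1; ring.
Qed.

Lemma odd_sqr0 x : (2%:R : k) != 0 -> homog true x -> x * x = 0.
Proof.
move=> two_neq0 hx; apply/funext => S; rewrite grass0E.
have : (x * x) S * 2%:R = 0.
  by rewrite mulr2n mulrDr mulr1 {1}(odd_anticomm hx hx) grass_oppE addNr.
by move/eqP; rewrite mulf_eq0 (negbTE two_neq0) orbF => /eqP.
Qed.

Definition even_part x : grass k := fun S => if odd #|` S| then 0 else x S.
Definition odd_part x : grass k := fun S => if odd #|` S| then x S else 0.

Lemma even_odd_partE x : x = even_part x + odd_part x.
Proof.
apply/funext => S; rewrite grass_addE /even_part /odd_part.
by case: odd; rewrite ?add0r ?addr0.
Qed.

Lemma homog_even_part x : homog false (even_part x).
Proof. by move=> S; rewrite /even_part; case: odd. Qed.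

Lemma homog_odd_part x : homog true (odd_part x).
Proof. by move=> S; rewrite /odd_part; case: odd. Qed.

End GrassParity.

Section GrassNilpotence.
Variables (k : fieldType) (p : nat).
Hypothesis pchar_p : p \in [pchar k].
Implicit Types (x : grass k) (S : {fset nat}).
Local Open Scope fset_scope.
Local Open Scope ring_scope.

Lemma grass_natmulE x n S : (x *+ n) S = x S *+ n.
Proof. by elim: n => [|n IHn]; rewrite ?mulr0n // !mulrS grass_addE IHn. Qed.

Lemma pchar_grass : p \in [pchar (grass k)].
Proof.
apply/andP; split; first exact: pcharf_prime pchar_p.
apply/eqP/funext => S; rewrite grass_natmulE grass0E grass1E.
by case: ifP => _; [exact: pcharf0 pchar_p | rewrite mul0rn].
Qed.

Definition grass_monomial (c : k) S0 : grass k := fun S => if S == S0 then c else 0.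

Lemma grass_monomial_sqr0 c S0 :
  (S0 = fset0 -> c = 0) -> grass_monomial c S0 * grass_monomial c S0 = 0.
Proof.
move=> c0; apply/funext => S; rewrite grass_mulE grass0E big1 // => A _.
rewrite /grass_monomial; case: eqP => [AS0|_]; last by rewrite mulr0 mul0r.
case: eqP => [SAS0|_]; last by rewrite mulr0.
suff -> : c = 0 by rewrite !mulr0.
apply: c0; apply/fsetP => z; rewrite inE; apply/negP => zS0.
by move: (zS0); rewrite -{1}SAS0 inE AS0 zS0.
Qed.

Lemma homog_grass_monomial c S0 :
  (odd #|` S0| -> c = 0) -> homog false (grass_monomial c S0).
Proof.
move=> c0 S oS; rewrite /grass_monomial; case: eqP => // eS.
by apply: c0; move: oS; rewrite eS; case: odd.
Qed.

(* Induction on the support: splitting off one monomial m, the two summands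
   commute since m is even, so Frobenius applies and m ^+ p = 0 as m * m = 0. *)
Lemma even_exprp0 (s : seq {fset nat}) x : homog false x -> x fset0 = 0 ->
  (forall S, x S != 0 -> S \in s) -> x ^+ p = 0.
Proof.
have p_gt1 := prime_gt1 (pcharf_prime pchar_p).
elim: s x => [|S0 s IHs] x ev_x x0 supp_x.
  have -> : x = 0.
    by apply/funext => S; rewrite grass0E; apply/eqP; apply: contraT => /supp_x.
  by rewrite expr0n; case: p p_gt1.
pose x' : grass k := fun S => if S == S0 then 0 else x S.
pose m := grass_monomial (x S0) S0.
have -> : x = x' + m.
  apply/funext => S; rewrite grass_addE /x' /m /grass_monomial.
  by case: eqP => [->|]; rewrite ?add0r ?addr0.
have ev_x' : homog false x' by move=> S oS; rewrite /x'; case: eqP => // _; apply: ev_x.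
have ev_m : homog false m by apply: homog_grass_monomial => oS0; apply: ev_x; rewrite oS0.
have x'_0 : x' fset0 = 0 by rewrite /x'; case: ifP.
have supp_x' : forall S, x' S != 0 -> S \in s.
  by move=> S; rewrite /x'; case: ifP => [_|nS /supp_x]; rewrite ?eqxx // inE nS.
have x'm : GRing.comm x' m by rewrite /GRing.comm even_central.
have := pFrobenius_autD_comm pchar_grass x'm; rewrite !pFrobenius_autE => ->.
rewrite (IHs _ ev_x' x'_0 supp_x') add0r -(subnK p_gt1) addn2 !exprS mulrA.
by rewrite grass_monomial_sqr0 ?mul0r // => S0_0; rewrite -x0 S0_0.
Qed.

Lemma even_part_exprp0 x : isG0 x -> even_part x ^+ p = 0.
Proof.
case=> x0 [s supp_x]; apply: (even_exprp0 (s := s)); first exact: homog_even_part.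
  by rewrite /even_part cardfs0.
by move=> S; rewrite /even_part; case: odd; rewrite ?eqxx //; apply: supp_x.
Qed.

Hypothesis p_gt2 : (2 < p)%N.

Lemma grass_kappa_mul (a v w : grass k) : isG0 v -> isG0 w ->
  (a * (v * w) - (v * w) * a) * a ^+ p.-1 * (v * w) ^+ p.-1 = 0.
Proof.
move=> G0v G0w.
have two_neq0 : (2%:R : k) != 0 by rewrite -(dvdn_pcharf pchar_p) gtnNdvd.
have Sp1 : p.-1.+1 = p by rewrite prednK // ltnW // ltnW.
rewrite (even_odd_partE a) (even_odd_partE v) (even_odd_partE w).
set a0 := even_part a; set a1 := odd_part a; set v0 := even_part v.
set v1 := odd_part v; set w0 := even_part w; set w1 := odd_part w.
have ev_a0 : homog false a0 := homog_even_part a.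
have ev_v0 : homog false v0 := homog_even_part v.
have ev_w0 : homog false w0 := homog_even_part w.
have od_a1 : homog true a1 := homog_odd_part a.
have od_v1 : homog true v1 := homog_odd_part v.
have od_w1 : homog true w1 := homog_odd_part w.
have ev_b0 : homog false (v0 * w0 + v1 * w1).
  exact: homogD (homogM ev_v0 ev_w0) (homogM od_v1 od_w1).
have od_b1 : homog true (v0 * w1 + v1 * w0).
  exact: homogD (homogM ev_v0 od_w1) (homogM od_v1 ev_w0).
have -> : (v0 + v1) * (w0 + w1) = (v0 * w0 + v1 * w1) + (v0 * w1 + v1 * w0).
  by rewrite mulrDl !mulrDr [v1 * w0 + _]addrC addrACA.
rewrite super_kappa; first last.
- exact: odd_anticomm.
- exact: odd_sqr0.
- exact: odd_sqr0.
- exact: even_central.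
- exact: even_central.
rewrite super_prod_odd_even ?mulr0 ?mul0rn //.
- exact: even_central.
- exact: even_central.
- exact: odd_sqr0.
- exact: odd_sqr0.
- exact: odd_anticomm.
- by rewrite Sp1 even_part_exprp0.
- by rewrite Sp1 even_part_exprp0.
Qed.

End GrassNilpotence.

Section FreeAlgebra.
Variable k : fieldType.
Implicit Types f g : FA k.

Lemma isFA_add f g : isFA f -> isFA g -> isFA (fa_add f g).
Proof.
move=> [f0 [sf supp_f]] [g0 [sg supp_g]]; split; first by rewrite /fa_add f0 g0 addr0.
exists (sf ++ sg) => w; rewrite mem_cat /fa_add.
have [/supp_f -> //|/negPn/eqP ->] := boolP (f w != 0).
by rewrite add0r => /supp_g ->; rewrite orbT.
Qed.

Lemma isFA_scale c f : isFA f -> isFA (fa_scale c f).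
Proof.
move=> [f0 [sf supp_f]]; split; first by rewrite /fa_scale f0 mulr0.
by exists sf => w; rewrite /fa_scale mulf_eq0 negb_or => /andP[_ /supp_f].
Qed.

Lemma isFA_mul f g : isFA f -> isFA g -> isFA (fa_mul f g).
Proof.
move=> [f0 [sf supp_f]] [g0 [sg supp_g]]; split; first by rewrite /fa_mul big_geq.
exists [seq a ++ b | a <- sf, b <- sg] => w nz.
have : has (fun i => f (take i w) * g (drop i w) != 0) (index_iota 1 (size w)).
  apply: contraR nz => /hasPn h; rewrite /fa_mul big_seq big1 // => i /h /negPn/eqP.
  by [].
case/hasP => i _; rewrite mulf_eq0 negb_or => /andP[/supp_f a /supp_g b].
by apply/allpairsP; exists (take i w, drop i w); rewrite /= cat_take_drop.
Qed.

Lemma fa_opp_scale f : fa_opp f = fa_scale (-1) f.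
Proof. by apply/funext => w; rewrite /fa_opp /fa_scale mulN1r. Qed.

Lemma isFA_opp f : isFA f -> isFA (fa_opp f).
Proof. by rewrite fa_opp_scale; apply: isFA_scale. Qed.

Lemma isFA_comm f g : isFA f -> isFA g -> isFA (fa_comm f g).
Proof. by move=> Ff Fg; apply: isFA_add; [apply: isFA_mul | apply/isFA_opp/isFA_mul]. Qed.

Lemma isFA_iter f n : isFA f -> isFA (iter n (fa_mul f) f).
Proof. by move=> Ff; elim: n => //= n IHn; apply: isFA_mul. Qed.

Lemma isFA_pow f n : isFA f -> isFA (fa_pow f n).
Proof. exact: isFA_iter. Qed.

Lemma isFA_kappa p f g : isFA f -> isFA g -> isFA (kappa p f g).
Proof.
move=> Ff Fg; apply: isFA_mul; last exact: isFA_pow.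
by apply: isFA_mul; [exact: isFA_comm | exact: isFA_pow].
Qed.

Variable phi : FA k -> G0 k.
Hypothesis hom_phi : alg_hom phi.

Lemma alg_hom_isG0 f : isFA f -> isG0 (phi f).
Proof. by case: hom_phi => h _ _ _; apply: h. Qed.

Lemma alg_hom_add f g : isFA f -> isFA g ->
  (phi (fa_add f g) : grass k) = (phi f : grass k) + (phi g : grass k).
Proof. by case: hom_phi => _ h _ _; apply: h. Qed.

Lemma alg_hom_mul f g : isFA f -> isFA g ->
  (phi (fa_mul f g) : grass k) = (phi f : grass k) * (phi g : grass k).
Proof. by case: hom_phi => _ _ _ h; apply: h. Qed.

Lemma alg_hom_opp f : isFA f -> (phi (fa_opp f) : grass k) = - (phi f : grass k).
Proof.
case: hom_phi => _ _ h _ Ff; rewrite fa_opp_scale h //.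
by apply/funext => S; rewrite grass_oppE /g0_scale mulN1r.
Qed.

Lemma alg_hom_comm f g : isFA f -> isFA g ->
  (phi (fa_comm f g) : grass k) = (phi f : grass k) * phi g - (phi g : grass k) * phi f.
Proof.
move=> Ff Fg; have Ffg := isFA_mul Ff Fg; have Fgf := isFA_mul Fg Ff.
rewrite /fa_comm /fa_sub alg_hom_add ?alg_hom_opp ?alg_hom_mul //.
exact: isFA_opp.
Qed.

Lemma alg_hom_pow f n : (0 < n)%N -> isFA f ->
  (phi (fa_pow f n) : grass k) = (phi f : grass k) ^+ n.
Proof.
move=> n_gt0 Ff; rewrite /fa_pow -[in RHS](prednK n_gt0).
elim: n.-1 => [|m IHm]; first by rewrite expr1.
by rewrite iterS alg_hom_mul ?IHm ?exprS //; apply: isFA_iter.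
Qed.

Lemma alg_hom_kappa p f g : (0 < p.-1)%N -> isFA f -> isFA g ->
  (phi (kappa p f g) : grass k) =
  ((phi f : grass k) * phi g - (phi g : grass k) * phi f)
    * (phi f : grass k) ^+ p.-1 * (phi g : grass k) ^+ p.-1.
Proof.
move=> p1_gt0 Ff Fg.
have Fc := isFA_comm Ff Fg; have Ffp := isFA_pow p.-1 Ff; have Fgp := isFA_pow p.-1 Fg.
by rewrite /kappa !alg_hom_mul ?alg_hom_comm ?alg_hom_pow //; apply: isFA_mul.
Qed.

End FreeAlgebra.

Theorem corollary2p3 (k : fieldType) (p : nat) (hp : prime p) (hp2 : (2 < p)%N)
  (hchar : p \in [pchar k]) (u v w : FA k) :
  isFA u -> isFA v -> isFA w -> T_G0 (kappa p u (fa_mul v w)).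
Proof.
move=> Fu Fv Fw; have Fvw := isFA_mul Fv Fw.
split; first exact: isFA_kappa.
move=> phi hom_phi; have p1_gt0 : (0 < p.-1)%N by rewrite -subn1 subn_gt0 prime_gt1.
rewrite (alg_hom_kappa hom_phi p1_gt0 Fu Fvw) (alg_hom_mul hom_phi Fv Fw).
exact: grass_kappa_mul (alg_hom_isG0 hom_phi Fv) (alg_hom_isG0 hom_phi Fw).
Qed.
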